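(* Let $t\in T_2$ and let $\mathcal{T}_t$ be the variety of $\Omega$-algebras defined by the single identity $t(x,y)=x$. Then the quasivariety $\mathcal{T}_t\circ\mathcal{S}$ coincides with the variety $\mathcal{T}_t^{\,p}$. In particular $\mathcal{T}_t\circ\mathcal{S}$ is a variety, and $\{t(x,y)=x\}^p$ is an equational base for it.
   Context: Standing conventions: $\Omega$-algebras are of a plural similarity type, i.e. there are no nullary operation symbols and at least one operation symbol of arity $\ge 2$. For $n\ge 1$, $T_n$ denotes the set of $\Omega$-terms in the variables $x_1,\dots,x_n$ in which each of these $n$ variables actually occurs. An identity is regular if exactly the same variables occur on both sides. $\mathcal{S}$ denotes the variety of $\Omega$-semilattices: all $\Omega$-algebras of the given type satisfying every regular identity. For a class $\mathcal{V}$ of $\Omega$-algebras, the Mal'tsev product $\mathcal{V}\circ\mathcal{S}$ is the class of all $\Omega$-algebras $A$ having a congruence $\theta$ such that $A/\theta\in\mathcal{S}$ and every $\theta$-class (a subalgebra) belongs to $\mathcal{V}$. Prolongation: for an identity $\sigma$ of the form $u(y_1,\dots,y_n)=v(y_1,\dots,y_n)$ (variables of $u,v$ among $y_1,\dots,y_n$) and $m\ge1$, let $\sigma^p_m$ be the set of all identities $u(r_1,\dots,r_n)=v(r_1,\dots,r_n)$ obtained by substituting $r_i(x_1,\dots,x_m)$ for $y_i$, with $r_1,\dots,r_n$ ranging over $T_m$; $\sigma^p=\bigcup_{m>0}\sigma^p_m$, and $\Sigma^p=\bigcup_{\sigma\in\Sigma}\sigma^p$. For a variety $\mathcal{V}$,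 its prolongation $\mathcal{V}^p$ is the variety defined by $\mathrm{Id}(\mathcal{V})^p$, where $\mathrm{Id}(\mathcal{V})$ is the set of all identities holding in $\mathcal{V}$. *)

From mathcomp Require Import all_boot.
Set Implicit Arguments. Unset Strict Implicit. Unset Printing Implicit Defensive.

Section UniversalAlgebra.
Variable O : Type.
Variable ar : O -> nat.

Definition plural : Prop := (forall o, 0 < ar o) /\ (exists o, 1 < ar o).

(* Omega-terms over the variables x_1, x_2, ... encoded as Var 0, Var 1, ... *)
Inductive term : Type :=
| Var : nat -> term
| App : forall o : O, ('I_(ar o) -> term) -> term.

Inductive occurs (k : nat) : term -> Prop :=
| occ_var : occurs k (Var k)
| occ_app : forall o (f : 'I_(ar o) -> term) (i : 'I_(ar o)),
    occurs k (f i) -> occurs k (App f).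

(* t \in T_n : the variables of t are exactly x_1..x_n (i.e. Var 0..Var (n-1)) *)
Definition in_T (n : nat) (t : term) : Prop := forall k, occurs k t <-> k < n.

Record algebra : Type := Algebra {
  carrier :> Type;
  op : forall o : O, ('I_(ar o) -> carrier) -> carrier }.

Fixpoint eval (A : algebra) (e : nat -> A) (t : term) : A :=
  match t with
  | Var k => e k
  | App o f => @op A o (fun i => eval e (f i))
  end.

Fixpoint subst (r : nat -> term) (t : term) : term :=
  match t with
  | Var k => r k
  | App o f => App (fun i => subst r (f i))
  end.

Definition identity := (term * term)%type.

Definition holds (A : algebra) (s : identity) : Prop :=
  forall e : nat -> A, eval e s.1 = eval e s.2.

Definition regular (s : identity) : Prop :=
  forall k, occurs k s.1 <-> occurs k s.2.

Definition model (Sigma : identity -> Prop) (A : algebra) : Prop :=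
  forall s, Sigma s -> holds A s.

Definition Id (V : algebra -> Prop) (s : identity) : Prop :=
  forall A : algebra, V A -> holds A s.

Definition prolong (Sigma : identity -> Prop) (s' : identity) : Prop :=
  exists s : identity, Sigma s /\
  exists n m : nat, 0 < m /\
    (forall k, occurs k s.1 \/ occurs k s.2 -> k < n) /\
    exists r : nat -> term,
      (forall i, i < n -> in_T m (r i)) /\
      s' = (subst r s.1, subst r s.2).

Definition congruence (A : algebra) (th : A -> A -> Prop) : Prop :=
  (forall x, th x x) /\ (forall x y, th x y -> th y x) /\
  (forall x y z, th x y -> th y z -> th x z) /\
  (forall o (f g : 'I_(ar o) -> A), (forall i, th (f i) (g i)) ->
      th (@op A o f) (@op A o g)).

(* A/th is an Omega-semilattice: A/th satisfies every regular identity
   (an assignment into A/th is the class of an assignment into A). *)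
Definition quotient_in_S (A : algebra) (th : A -> A -> Prop) : Prop :=
  forall s, regular s -> forall e : nat -> A, th (eval e s.1) (eval e s.2).

(* every th-class (a subalgebra of A, with the restricted operations)
   satisfies all identities of Sigma *)
Definition classes_in (Sigma : identity -> Prop) (A : algebra)
    (th : A -> A -> Prop) : Prop :=
  forall a : A, forall s, Sigma s -> forall e : nat -> A,
    (forall k, th a (e k)) -> eval e s.1 = eval e s.2.

Definition maltsev_S (Sigma : identity -> Prop) (A : algebra) : Prop :=
  exists th : A -> A -> Prop,
    congruence th /\ quotient_in_S th /\ classes_in Sigma th.

End UniversalAlgebra.

(* Sufficiency: if A satisfies {t(x,y) = x}^p then t(u,v) = u holds in A for
   any two terms u, v with the same variables (rename their variables to
   x_1..x_m).  Hence a ~ b :<-> t(a,b) = a and t(b,a) = b is a congruence: it is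
   reflexive and transitive by such regular instances, and compatible by the
   regular identity f(t(x_1,y_1),...) vs f(t(y_1,x_1),...).  Every regular
   identity holds modulo ~, and each ~-class satisfies t(x,y) = x.
   Necessity: every prolonged identity s(r_1,...,r_n) with all r_i in T_m is
   evaluated, for a fixed assignment, inside one congruence class (the r_i
   have the same variables, so their values are congruent); that class is a
   subalgebra in the variety, where s holds. *)
From mathcomp Require Import all_boot.
From Stdlib Require Import FunctionalExtensionality ProofIrrelevance Setoid.
Set Implicit Arguments. Unset Strict Implicit. Unset Printing Implicit Defensive.

Section Terms.
Variables (O : Type) (ar : O -> nat).

Lemma occurs_inv k (u : term ar) : occurs k u ->
  match u with Var k' => k = k' | App o f => exists i, occurs k (f i) end.
Proof. by case => [|o f i H]; [|exists i]. Qed.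

Lemma occurs_Var j k : occurs j (Var ar k) <-> j = k.
Proof. by split; [move/occurs_inv|move=> ->; constructor]. Qed.

Lemma eval_ext (A : algebra ar) (e1 e2 : nat -> A) (u : term ar) :
  (forall k, occurs k u -> e1 k = e2 k) -> eval e1 u = eval e2 u.
Proof.
elim: u => [k|o f IH] H /=; first by apply: H; constructor.
congr op; apply: functional_extensionality => i; apply: IH => k Hk.
exact/H/(occ_app (i:=i)).
Qed.

Lemma eval_subst (A : algebra ar) (e : nat -> A) r (u : term ar) :
  eval e (subst r u) = eval (fun k => eval e (r k)) u.
Proof. by elim: u => [k|o f IH] //=; congr op; apply: functional_extensionality. Qed.

Lemma occurs_subst r (u : term ar) j :
  occurs j (subst r u) <-> exists k, occurs k u /\ occurs j (r k).
Proof.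
elim: u => [k|o f IH] /=.
  split; first by move=> H; exists k; split => //; constructor.
  by case=> k' [/occurs_inv ->].
split.
  move=> /occurs_inv [i /IH [k [H1 H2]]]; exists k; split => //.
  exact: (occ_app (i:=i)).
case=> k [/occurs_inv [i Hi] H2]; apply: (occ_app (i:=i)); apply/IH.
by exists k.
Qed.

Fixpoint vars (u : term ar) : seq nat :=
  match u with
  | Var k => [:: k]
  | App o f => flatten [seq vars (f i) | i <- enum 'I_(ar o)]
  end.

Lemma mem_vars (u : term ar) k : k \in vars u <-> occurs k u.
Proof.
elim: u => [k'|o f IH] /=.
  by rewrite inE occurs_Var; split => [/eqP|->].
split.
  by case/flattenP=> s /mapP [i _ ->] /IH; apply: occ_app.
move/occurs_inv => [i /IH H]; apply/flattenP; exists (vars (f i)) => //.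
by apply/mapP; exists i; rewrite ?mem_enum.
Qed.

Lemma exists_occurs (Hpl : plural ar) (u : term ar) : exists k, occurs k u.
Proof.
elim: u => [k|o f IH]; first by exists k; constructor.
have [k Hk] := IH (Ordinal (Hpl.1 o)); exists k; exact: occ_app Hk.
Qed.

Section Renaming.
Variable u : term ar.
Let l := undup (vars u).
Let ren (k : nat) : term ar := Var ar (index k l).

Lemma eval_subst_ren (A : algebra ar) (e : nat -> A) (w : term ar) :
  (forall k, occurs k w -> occurs k u) ->
  eval (fun i => e (nth 0 l i)) (subst ren w) = eval e w.
Proof.
move=> Hw; rewrite eval_subst; apply: eval_ext => k Hk /=.
by rewrite nth_index // mem_undup; apply/mem_vars/Hw.
Qed.

Lemma subst_ren_in_T (w : term ar) :
  (forall k, occurs k w <-> occurs k u) -> in_T (size l) (subst ren w).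
Proof.
move=> Hw j; rewrite occurs_subst; split.
  case=> k [Hk /occurs_inv ->]; rewrite index_mem mem_undup; apply/mem_vars/Hw/Hk.
move=> Hj; exists (nth 0 l j); split.
  by apply/Hw/mem_vars; rewrite -mem_undup; apply: mem_nth.
by rewrite /ren index_uniq ?undup_uniq //; constructor.
Qed.

Lemma size_undup_vars_gt0 : plural ar -> 0 < size l.
Proof.
move=> Hpl; have [k Hk] := exists_occurs Hpl u.
by apply: (@leq_trans (index k l).+1) => //; rewrite index_mem mem_undup; apply/mem_vars.
Qed.

End Renaming.

Lemma prolong_mono (Sigma Sigma' : identity ar -> Prop) s :
  (forall s, Sigma s -> Sigma' s) -> prolong Sigma s -> prolong Sigma' s.
Proof. by move=> HS [s0 [/HS Hs0 rest]]; exists s0. Qed.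

Lemma Id_model (Sigma : identity ar -> Prop) s : Sigma s -> Id (model Sigma) s.
Proof. by move=> Hs A; apply. Qed.

Lemma prolong_subst_same_vars (Hpl : plural ar) (Sigma : identity ar -> Prop)
    (A : algebra ar) (s : identity ar) (n : nat) (r : nat -> term ar) (e : nat -> A) :
  model (prolong Sigma) A -> Sigma s ->
  (forall k, occurs k s.1 \/ occurs k s.2 -> k < n) ->
  (forall i j k, i < n -> j < n -> occurs k (r i) <-> occurs k (r j)) ->
  eval e (subst r s.1) = eval e (subst r s.2).
Proof.
move=> HA Hs Hn Hr.
have [k0 Hk0] := exists_occurs Hpl s.1.
have n0 : 0 < n by apply: leq_ltn_trans (Hn k0 (or_introl Hk0)).
pose ren := fun k => Var ar (index k (undup (vars (r 0)))).
pose r' := fun k => subst ren (r k).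
have Hp : prolong Sigma (subst r' s.1, subst r' s.2).
  exists s; split => //; exists n, (size (undup (vars (r 0)))).
  split; first exact: size_undup_vars_gt0.
  split=> //; exists r'; split => // i Hi.
  by apply: subst_ren_in_T => k; apply: Hr.
have := HA _ Hp (fun i => e (nth 0 (undup (vars (r 0))) i)).
rewrite /= !eval_subst.
have back : forall w, (forall k, occurs k w -> k < n) ->
    eval (fun k => eval (fun i => e (nth 0 (undup (vars (r 0))) i)) (r' k)) w
    = eval (fun k => eval e (r k)) w.
  move=> w Hw; apply: eval_ext => k /Hw Hk; apply: eval_subst_ren => j.
  by rewrite (Hr k 0).
by rewrite !back // => k Hk; apply: Hn; tauto.
Qed.

End Terms.

Section BinaryTerm.
Variables (O : Type) (ar : O -> nat).
Hypothesis Hpl : plural ar.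
Variable t : term ar.
Hypothesis Ht : in_T 2 t.

Let Sigma_t : identity ar -> Prop := fun s => s = (t, Var ar 0).

Definition tA (A : algebra ar) (a b : A) : A :=
  eval (fun k => if k == 0 then a else b) t.
Definition tT (u v : term ar) : term ar :=
  subst (fun k => if k == 0 then u else v) t.

Lemma eval_tT (A : algebra ar) e u v : eval e (tT u v) = tA (eval e u) (eval e v) :> A.
Proof. by rewrite /tT eval_subst; apply: eval_ext => k _; case: (k == 0). Qed.

Lemma occurs_tT u v j : occurs j (tT u v) <-> occurs j u \/ occurs j v.
Proof.
rewrite /tT occurs_subst; split.
  by case=> k [/Ht Hk]; case: eqP => _; tauto.
by case=> H; [exists 0 | exists 1]; split => //; apply/Ht.
Qed.

Lemma eval_t (A : algebra ar) (e : nat -> A) : eval e t = tA (e 0) (e 1).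
Proof. by apply: eval_ext => k /Ht; case: k => [|[|]]. Qed.

Section Sufficiency.
Variable A : algebra ar.
Hypothesis HA : model (prolong Sigma_t) A.

Lemma tA_same_vars (u v : term ar) (e : nat -> A) :
  (forall k, occurs k u <-> occurs k v) -> tA (eval e u) (eval e v) = eval e u.
Proof.
move=> Huv; rewrite -eval_tT.
apply: (@prolong_subst_same_vars _ _ Hpl Sigma_t A (t, Var ar 0) 2) => //.
- by move=> k [/Ht|/occurs_Var ->].
- by case=> [|[|//]] [|[|//]] k _ _ /=; rewrite ?Huv.
Qed.

Lemma tA_idem (a : A) : tA a a = a.
Proof. exact: (@tA_same_vars (Var ar 0) (Var ar 0) (fun _ => a)). Qed.

Lemma tA_trans (a b c : A) : tA a b = a -> tA b a = b -> tA b c = b -> tA c b = c ->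
  tA a c = a.
Proof.
move=> ab ba bc cb.
pose e := fun k => if k == 0 then a else if k == 1 then b else c.
pose U := tT (Var ar 0) (tT (Var ar 1) (Var ar 2)).
pose V := tT (Var ar 2) (tT (Var ar 1) (Var ar 0)).
have := @tA_same_vars U V e.
(* t(a,t(b,c)) = t(a,b) = a, and t(c,t(b,a)) = t(c,b) = c *)
rewrite /U /V !eval_tT /= bc ab ba cb; apply => k.
by rewrite !occurs_tT !occurs_Var; tauto.
Qed.

Definition tA_equiv (a b : A) : Prop := tA a b = a /\ tA b a = b.

Lemma tA_equiv_op o (f g : 'I_(ar o) -> A) :
  (forall i, tA_equiv (f i) (g i)) -> tA (op f) (op g) = op f.
Proof.
move=> Hfg; set k := ar o; have i0 : 'I_(ar o) := Ordinal (Hpl.1 o).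
pose e := fun j => if j < k then f (insubd i0 j) else g (insubd i0 (j - k)).
have ef (i : 'I_(ar o)) : e i = f i.
  by rewrite /e ltn_ord; congr f; apply: val_inj; rewrite val_insubd ltn_ord.
have eg (i : 'I_(ar o)) : e (k + i) = g i.
  rewrite /e ltnNge leq_addr /= addKn.
  by congr g; apply: val_inj; rewrite val_insubd ltn_ord.
pose U := App (fun i : 'I_(ar o) => tT (Var ar i) (Var ar (k + i))).
pose V := App (fun i : 'I_(ar o) => tT (Var ar (k + i)) (Var ar i)).
have eU : eval e U = op f.
  by rewrite /=; congr op; apply: functional_extensionality => i; rewrite eval_tT /= ef eg; case: (Hfg i).
have eV : eval e V = op g.
  by rewrite /=; congr op; apply: functional_extensionality => i; rewrite eval_tT /= ef eg; case: (Hfg i).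
rewrite -eU -eV; apply: tA_same_vars => j.
by split=> /occurs_inv [i]; rewrite occurs_tT !occurs_Var => H;
  apply: (occ_app (i:=i)); rewrite occurs_tT !occurs_Var; tauto.
Qed.

Lemma tA_equiv_congruence : congruence tA_equiv.
Proof.
split; first by move=> x; split; apply: tA_idem.
split; first by move=> x y [].
split; first by move=> x y z [xy yx] [yz zy]; split;
  [apply: (tA_trans xy yx yz zy) | apply: (tA_trans zy yz yx xy)].
move=> o f g Hfg; split; apply: tA_equiv_op => // i.
by case: (Hfg i) => fg gf; split.
Qed.

Lemma tA_equiv_quotient_in_S : quotient_in_S tA_equiv.
Proof. by move=> s Hs e; split; apply: tA_same_vars => k; rewrite Hs. Qed.

Lemma tA_equiv_classes_in : classes_in Sigma_t tA_equiv.
Proof.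
move=> a s -> e He /=; rewrite eval_t.
have [h1 h2] := He 0; have [h3 h4] := He 1.
exact: (tA_trans h2 h1 h3 h4).
Qed.

Lemma prolong_maltsev : maltsev_S Sigma_t A.
Proof.
exists tA_equiv; split; first exact: tA_equiv_congruence.
by split; [exact: tA_equiv_quotient_in_S | exact: tA_equiv_classes_in].
Qed.

End Sufficiency.
End BinaryTerm.

Section Necessity.
Variables (O : Type) (ar : O -> nat).
Hypothesis Hpl : plural ar.
Variables (Sigma : identity ar -> Prop) (A : algebra ar) (th : A -> A -> Prop).
Hypotheses (Hth : congruence th) (HS : quotient_in_S th) (Hc : classes_in Sigma th).

Lemma class_op_closed (a : A) o (f : 'I_(ar o) -> A) :
  (forall i, th a (f i)) -> th a (op f).
Proof.
case: Hth => _ [ths [tht thc]] Hf.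
apply: (tht _ (op (fun _ : 'I_(ar o) => a))); last exact: thc.
apply: ths; apply: (HS (s := (App (fun _ : 'I_(ar o) => Var ar 0), Var ar 0)) _ (fun _ => a)).
move=> j /=; split; first by move/occurs_inv => [i /occurs_Var ->]; constructor.
by move/occurs_Var => ->; apply: (occ_app (i := Ordinal (Hpl.1 o))); constructor.
Qed.

Definition class_algebra (a : A) : algebra ar :=
  @Algebra O ar {x : A | th a x}
    (fun o f => exist _ (op (fun i => sval (f i)))
                  (class_op_closed (fun i => proj2_sig (f i)))).

Lemma sval_eval_class (a : A) (e : nat -> class_algebra a) u :
  sval (eval e u) = eval (fun k => sval (e k)) u.
Proof. by elim: u => [k|o f IH] //=; congr op; apply: functional_extensionality. Qed.

Lemma class_algebra_model (a : A) : model Sigma (class_algebra a).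
Proof.
move=> s Hs e; apply: eq_sig_hprop => [x p q|]; first exact: proof_irrelevance.
rewrite !sval_eval_class; apply: (Hc (a := a)) => // k; exact: proj2_sig.
Qed.

Lemma maltsev_prolong : model (prolong (Id (model Sigma))) A.
Proof.
move=> _ [s [Hs [n [m [_ [Hn [r [Hr ->]]]]]]]] e /=.
have [k0 Hk0] := exists_occurs Hpl s.1.
have n0 : 0 < n by apply: leq_ltn_trans (Hn k0 (or_introl Hk0)).
pose r' := fun k => if k < n then r k else r 0.
have Hr' k : in_T m (r' k) by rewrite /r'; case: ifP => [H|_]; apply: Hr.
(* all r' k have the variables x_1..x_m, so their values share one class *)
pose a := eval e (r 0).
have tha k : th a (eval e (r' k)).
  by apply: (HS (s := (r 0, r' k))) => j /=; rewrite (Hr 0 n0 j) (Hr' k j).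
pose e' := fun k => exist (th a) (eval e (r' k)) (tha k) : class_algebra a.
have := f_equal sval (Hs _ (@class_algebra_model a) e').
rewrite !sval_eval_class /= !eval_subst => E.
have r'E w : (forall k, occurs k w -> k < n) ->
    eval (fun k => eval e (r k)) w = eval (fun k => eval e (r' k)) w.
  by move=> Hw; apply: eval_ext => k /Hw; rewrite /r' => ->.
by rewrite !r'E ?E // => k Hk; apply: Hn; tauto.
Qed.

End Necessity.

Theorem theorem4p9 (O : Type) (ar : O -> nat) (Hpl : plural ar)
    (t : term ar) (Ht : in_T 2 t) :
  let Sigma_t : identity ar -> Prop := fun s => s = (t, Var ar 0) in
  (forall A : algebra ar,
      maltsev_S Sigma_t A <-> model (prolong (Id (model Sigma_t))) A) /\
  (forall A : algebra ar,
      maltsev_S Sigma_t A <-> model (prolong Sigma_t) A).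
Proof.
move=> Sigma_t.
have weaken A : model (prolong (Id (model Sigma_t))) A -> model (prolong Sigma_t) A.
  by move=> HA s Hs; apply/HA/(prolong_mono (@Id_model _ _ _) Hs).
have necessity A : maltsev_S Sigma_t A -> model (prolong (Id (model Sigma_t))) A.
  by case=> th [Hth [HS Hc]]; apply: maltsev_prolong Hc.
split=> A; split.
- exact: necessity.
- by move/weaken; apply: prolong_maltsev.
- by move/necessity/weaken.
- exact: prolong_maltsev.
Qed.
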